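(* Let $G$ be a locally compact group with Haar measure $\nu$ and $U$ an open symmetric relatively compact neighborhood of the identity. For every $n\in\mathbb N$ there exists a regular compact set $K$ with $U^n\subseteq K\subseteq U^{n+1}$ and $\nu(\partial K)=0$.
   Context: A compact set is regular if it equals the closure of its interior. $\partial K$ is the topological boundary of $K$; $U^m$ is the set of products of $m$ elements of $U$. *)

From HB Require Import structures.
From mathcomp Require Import all_boot all_order all_algebra.
From mathcomp Require Import all_classical all_reals all_analysis.
Set Implicit Arguments. Unset Strict Implicit. Unset Printing Implicit Defensive.
Import Order.TTheory GRing.Theory Num.Theory.
Local Open Scope classical_set_scope.
Local Open Scope ring_scope.

Definition topological_group (G : ptopologicalType)
    (mul : G -> G -> G) (inv : G -> G) (e : G) : Prop :=
  [/\ (forall x y z, mul x (mul y z) = mul (mul x y) z),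
      (forall x, mul e x = x /\ mul x e = x),
      (forall x, mul (inv x) x = e /\ mul x (inv x) = e),
      continuous (fun p : G * G => mul p.1 p.2) &
      continuous inv].

Definition locally_compact_group (G : ptopologicalType)
    (mul : G -> G -> G) (inv : G -> G) (e : G) : Prop :=
  [/\ topological_group mul inv e, hausdorff_space G & locally_compact [set: G]].

Notation borel G := (g_sigma_algebraType (@open G)).

Definition haar_measure (R : realType) (G : ptopologicalType)
    (mul : G -> G -> G) (nu : {measure set (borel G) -> \bar R}) : Prop :=
  [/\ (forall (g : G) (A : set G), measurable (A : set (borel G)) ->
         nu (mul g @` A) = nu A),
      (forall K : set G, compact K -> (nu K < +oo)%E),
      (forall O : set G, open O -> O !=set0 -> (0 < nu O)%E),
      (forall A : set G, measurable (A : set (borel G)) ->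
         nu A = ereal_inf [set nu O | O in [set O : set G | open O /\ A `<=` O]]) &
      (forall O : set G, open O ->
         nu O = ereal_sup [set nu K | K in [set K : set G | compact K /\ K `<=` O]])].

Fixpoint setpow (G : Type) (mul : G -> G -> G) (e : G) (U : set G) (m : nat)
    : set G :=
  match m with
  | 0%N => [set e]
  | m'.+1 => [set y | exists x u, [/\ setpow mul e U m' x, U u & y = mul x u]]
  end.

Definition boundary (T : topologicalType) (A : set T) : set T :=
  closure A `\` interior A.

Definition regular_compact (T : topologicalType) (K : set T) : Prop :=
  compact K /\ K = closure (interior K).

From HB Require Import structures.
From mathcomp Require Import all_boot all_order all_algebra.
From mathcomp Require Import all_classical all_reals all_analysis.
From mathcomp Require Import finmap.
Set Implicit Arguments. Unset Strict Implicit. Unset Printing Implicit Defensive.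
Import Order.TTheory GRing.Theory Num.Theory.
Local Open Scope classical_set_scope.
Local Open Scope ring_scope.
Import numFieldNormedType.Exports.

(* Take a Urysohn function g with g < 1/2 on the closure of U^n and g = 1
   off the open set U^(n+1) (the closure of U^n lies in U^(n+1) because U is
   a symmetric neighbourhood of e).  The level sets {g = t}, 1/2 < t < 1, are
   disjoint Borel subsets of the compact set (closure U)^(n+1), which has
   finite Haar measure, so all but countably many of them are null.  For such
   a t, K = closure {g < t} is the closure of an open set, hence regular, it
   lies between U^n and U^(n+1), and its boundary is contained in {g = t}. *)

Lemma setpow_subset (G : Type) (mul : G -> G -> G) (e : G) (V W : set G) m :
  V `<=` W -> setpow mul e V m `<=` setpow mul e W m.
Proof.
move=> VW; elim: m => [//|m IH] _ [x [u [Px Vu ->]]].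
by exists x, u; split => //; [exact: IH | exact: VW].
Qed.

Section topological_group.
Variables (G : ptopologicalType) (mul : G -> G -> G) (inv : G -> G) (e : G).
Hypothesis TG : topological_group mul inv e.

Lemma grp_mulA x y z : mul x (mul y z) = mul (mul x y) z.
Proof. by case: TG. Qed.

Lemma grp_mul1l x : mul e x = x.
Proof. by case: TG => _ /(_ x) []. Qed.

Lemma grp_mul1r x : mul x e = x.
Proof. by case: TG => _ /(_ x) []. Qed.

Lemma grp_mulVl x : mul (inv x) x = e.
Proof. by case: TG => _ _ /(_ x) []. Qed.

Lemma grp_mulVr x : mul x (inv x) = e.
Proof. by case: TG => _ _ /(_ x) []. Qed.

Lemma grp_mulKl x y : mul (inv x) (mul x y) = y.
Proof. by rewrite grp_mulA grp_mulVl grp_mul1l. Qed.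

Lemma grp_mulKr x y : mul x (mul (inv x) y) = y.
Proof. by rewrite grp_mulA grp_mulVr grp_mul1l. Qed.

Lemma grp_invMV x y : inv (mul (inv x) y) = mul (inv y) x.
Proof.
have inv_r : mul (mul (inv x) y) (mul (inv y) x) = e.
  by rewrite -grp_mulA (grp_mulA y) grp_mulVr grp_mul1l grp_mulVl.
by rewrite -(grp_mulKl (mul (inv x) y) (mul (inv y) x)) inv_r grp_mul1r.
Qed.

Lemma continuous_lmul c : continuous (mul c).
Proof.
have cmul : continuous (fun p : G * G => mul p.1 p.2) by case: TG.
have -> : mul c = (fun p : G * G => mul p.1 p.2) \o (fun z => (c, z)) by [].
move=> x; apply: continuous_comp; last exact: cmul.
by apply: cvg_pair; [exact: cvg_cst | exact: cvg_id].
Qed.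

Lemma nbhs_lmul_preimage (O : set G) c y :
  open O -> O (mul c y) -> nbhs y (mul c @^-1` O).
Proof. by move=> oO Ocy; apply: continuous_lmul; exact: open_nbhs_nbhs. Qed.

Lemma compact_setpow (V : set G) m : compact V -> compact (setpow mul e V m).
Proof.
move=> cV; elim: m => [|m IH]; first exact: compact_set1.
have -> : setpow mul e V m.+1 =
    (fun p : G * G => mul p.1 p.2) @` (setpow mul e V m `*` V).
  apply/seteqP; split => y; first by case=> x [u [Px Vu ->]]; exists (x, u).
  by case=> -[x u] [/= Px Vu] <-; exists x, u.
apply: continuous_compact; last exact: compact_setX.
by apply: continuous_subspaceT; case: TG.
Qed.

Variable U : set G.
Hypothesis oU : open U.

Lemma open_setpowS m : open (setpow mul e U m.+1).
Proof.
rewrite openE => _ [x [u [Px Uu ->]]].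
have := @nbhs_lmul_preimage U (inv x) (mul x u) oU; rewrite grp_mulKl.
move=> /(_ Uu); apply: filterS => z /= Uxz.
by exists x, (mul (inv x) z); rewrite grp_mulKr.
Qed.

Hypotheses (Ue : U e) (Usym : forall x, U x -> U (inv x)).

Lemma closure_setpow_sub m : closure (setpow mul e U m) `<=` setpow mul e U m.+1.
Proof.
move=> x clx.
have := @nbhs_lmul_preimage U (inv x) x oU; rewrite grp_mulVl.
case/(_ Ue)/clx => a [Pa Ua].
exists a, (mul (inv a) x); split; rewrite ?grp_mulKr //.
by rewrite -grp_invMV; exact: Usym.
Qed.

End topological_group.

Section null_fiber.
Context d (T : measurableType d) (R : realType).
Variables (mu : {measure set T -> \bar R}) (f : T -> R) (D : set T).
Hypotheses (mD : measurable D) (muD_fin : (mu D < +oo)%E).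
Hypothesis mfiber : forall t, measurable (D `&` f @^-1` [set t]).

Lemma finite_fiber_measure_gt k :
  finite_set [set t | (k.+1%:R^-1%:E < mu (D `&` f @^-1` [set t]))%E].
Proof.
apply: contrapT => /infiniteP /pcard_leP /injfunPex[/= q q_gt q_inj].
pose A i := D `&` f @^-1` [set q i].
have mA i : measurable (A i) by exact: mfiber.
have tA : trivIset [set: nat] A.
  move=> i j _ _ [x [[_ /= fxi] [_ /= fxj]]].
  by apply: q_inj; rewrite ?in_setE // -fxi -fxj.
have sum_le : (\sum_(i <oo | i \in [set: nat]) mu (A i) <= mu D)%E.
  rewrite -measure_bigcup //; apply: le_measure; rewrite ?in_setE //.
    exact: bigcup_measurable.
  by move=> x [i _ []].
set M := fine (mu D); have muDE : mu D = M%:E.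
  by rewrite fineK // ge0_fin_numE ?measure_ge0.
pose m := (k.+1 * Num.Def.archi_bound M)%N.
have : (M%:E < \sum_(0 <= i < m | i \in [set: nat]) mu (A i))%E.
  rewrite big_mkcond /=.
  apply: (@lt_le_trans _ _ (\sum_(0 <= i < m) (k.+1%:R^-1)%:E)%E); last first.
    by apply: lee_sum => i _; rewrite in_setT; apply/ltW/q_gt.
  rewrite sumEFin sumr_const_nat subn0 lte_fin /m mulrnA.
  rewrite -[_ *+ k.+1]mulr_natr mulVf ?pnatr_eq0 //.
  by apply: archi_boundP; rewrite fine_ge0 ?measure_ge0.
apply/negP; rewrite -leNgt -muDE; apply: le_trans sum_le.
exact: nneseries_lim_ge.
Qed.

Lemma countable_fiber_measure_gt0 :
  countable [set t | (0 < mu (D `&` f @^-1` [set t]))%E].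
Proof.
apply: (@sub_countable _ _ _
  (\bigcup_k [set t | (k.+1%:R^-1%:E < mu (D `&` f @^-1` [set t]))%E])).
  apply: subset_card_le => t /= mu_gt0.
  have : mu (D `&` f @^-1` [set t]) \is a fin_num.
    rewrite ge0_fin_numE ?measure_ge0 //; apply: le_lt_trans muD_fin.
    by apply: le_measure; rewrite ?in_setE.
  move=> /fineK fiberE; move: mu_gt0; rewrite -fiberE lte_fin.
  by case/ltr_add_invr => k; rewrite add0r => ?; exists k; rewrite //= -fiberE.
apply: bigcup_countable => // k _.
exact/finite_set_countable/finite_fiber_measure_gt.
Qed.

End null_fiber.

Lemma uncountable_itv (R : realType) (a b : R) : a < b -> ~ countable `]a, b[%classic.
Proof.
move=> ab /countable_lebesgue_measure0.
rewrite lebesgue_measure_itv /= lte_fin ab => /eqP; rewrite eqe subr_eq0.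
by move/eqP => ba; move: ab; rewrite ba ltxx.
Qed.

Lemma exists_null_fiber d (T : measurableType d) (R : realType)
    (mu : {measure set T -> \bar R}) (f : T -> R) (D : set T) (a b : R) :
  measurable D -> (mu D < +oo)%E ->
  (forall t, measurable (D `&` f @^-1` [set t])) -> a < b ->
  exists t, a < t < b /\ mu (D `&` f @^-1` [set t]) = 0%E.
Proof.
move=> mD muD_fin mfiber ab; apply: contrapT => no_null.
apply: (uncountable_itv ab); apply: sub_countable
  (countable_fiber_measure_gt0 mD muD_fin mfiber).
apply: subset_card_le => t /= abt; rewrite lt0e measure_ge0 andbT.
by apply/eqP => null; apply: no_null; exists t; move: abt; rewrite /= in_itv.
Qed.

Lemma continuous_bigmin (X : topologicalType) (R : realType) (I : eqType)
    (s : seq I) (F : I -> X -> R) (x0 : R) :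
  (forall i, i \in s -> continuous (F i)) ->
  continuous (fun x => \big[Order.min/x0]_(i <- s) F i x).
Proof.
elim: s => [_|j s IH cF] x.
  by under eq_fun do rewrite big_nil; exact: cvg_cst.
under eq_fun do rewrite big_cons.
apply: continuous_min; first by apply: cF; rewrite mem_head.
by apply: IH => i si; apply: cF; rewrite in_cons si orbT.
Qed.

Section sublevel.
Context (X : topologicalType) (R : realType) (g : X -> R) (t : R).
Hypothesis cg : continuous g.

Lemma open_sublevel : open [set x | g x < t].
Proof. exact: (@open_comp _ _ g [set y | y < t] (fun x _ => @cg x) (@open_lt _ t)). Qed.

Lemma closed_level : closed (g @^-1` [set t]).
Proof. exact: (@closed_comp _ _ g [set t] (fun x _ => @cg x) (@closed_eq _ t)). Qed.

Lemma closure_sublevel_le : closure [set x | g x < t] `<=` [set x | g x <= t].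
Proof.
have cle : closed [set x | g x <= t].
  exact: (@closed_comp _ _ g [set y | y <= t] (fun x _ => @cg x) (@closed_le _ t)).
rewrite [X in _ `<=` X](closure_id _).1 //; apply: closureS => x; exact: ltW.
Qed.

Lemma boundary_closure_sublevel :
  boundary (closure [set x | g x < t]) `<=` g @^-1` [set t].
Proof.
move=> x [/closed_closure/closure_sublevel_le + nintx].
rewrite /= le_eqVlt => /orP[/eqP // | gxt]; exfalso; apply: nintx.
have sub_int : [set x | g x < t] `<=` (closure [set x | g x < t])°.
  by rewrite -open_subsetE; [exact: subset_closure | exact: open_sublevel].
exact: sub_int.
Qed.

Lemma regular_compact_closure_sublevel (D : set X) :
  compact D -> closure [set x | g x < t] `<=` D ->
  regular_compact (closure [set x | g x < t]).
Proof.
move=> cD KD; split; first exact: (subclosed_compact (@closed_closure _ _) cD KD).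
by rewrite closure_open_regclosed //; exact: open_sublevel.
Qed.

End sublevel.

Section locally_compact_separation.
Context (X : ptopologicalType) (R : realType).
Hypotheses (lcX : locally_compact [set: X]) (hsX : hausdorff_space X).

Lemma locally_compact_point_separator (B : set X) c : closed B -> ~ B c ->
  exists f : X -> R, [/\ continuous f, f c = 0 & forall x, B x -> f x = 1].
Proof.
move=> clB Bc.
have /(@uniform_separatorP _ R) [f [cf _ f0 f1]] :=
  @locally_compact_completely_regular X R lcX hsX c B clB Bc.
exists f; split => //; first by apply: f0; exists c.
by move=> x Bx; apply: f1; exists x.
Qed.

(* The point separators of a finite subcover of C are combined by a pointwise
   minimum. *)
Lemma compact_open_separator (C O : set X) : compact C -> open O -> C `<=` O ->
  exists g : X -> R, [/\ continuous g,
    forall x, C x -> g x < 2^-1 & forall x, ~ O x -> g x = 1].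
Proof.
move=> cC oO CO.
have sep c : exists f : X -> R,
    C c -> [/\ continuous f, f c = 0 & forall x, ~ O x -> f x = 1].
  have [Cc|nCc] := pselect (C c); last by exists (fun=> 0) => /nCc.
  have [f fP] := locally_compact_point_separator
    (open_closedC oO) (fun nOc : ~ O c => nOc (CO c Cc)).
  by exists f.
have [F FP] := choice sep.
have := cC; rewrite compact_cover.
case/(_ X C (fun c => [set x | F c x < 2^-1])) => [c Cc|c Cc|s sC Ccov].
- by case: (FP c Cc) => cF _ _; exact: open_sublevel.
- by exists c => //=; case: (FP c Cc) => _ -> _; rewrite invr_gt0 ltr0n.
have FsP c : c \in s ->
    [/\ continuous (F c), F c c = 0 & forall x, ~ O x -> F c x = 1].
  by move=> /sC/set_mem/FP.
exists (fun x => \big[Order.min/1]_(c <- s) F c x); split.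
- by apply: continuous_bigmin => c /FsP[].
- move=> x /Ccov[c /= cs Fcx]; apply: le_lt_trans Fcx.
  exact: ge_bigmin_seq.
- move=> x Ox; rewrite big_seq; apply: bigmin_eq_id => c /FsP[_ _ /(_ x Ox) ->].
  exact: lexx.
Qed.

End locally_compact_separation.

Section borel_sets.
Context (X : ptopologicalType).

Lemma open_measurable_borel (A : set X) : open A -> measurable (A : set (borel X)).
Proof. exact: sub_sigma_algebra. Qed.

Lemma closed_measurable_borel (A : set X) :
  closed A -> measurable (A : set (borel X)).
Proof.
move=> cA; rewrite -[A]setCK; apply: measurableC.
by apply: open_measurable_borel; exact: closed_openC.
Qed.

Lemma boundary_measurable_borel (A : set X) :
  measurable (boundary A : set (borel X)).
Proof.
apply: measurableD.
  by apply: closed_measurable_borel; exact: closed_closure.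
by apply: open_measurable_borel; exact: open_interior.
Qed.

Lemma compact_null_level (R : realType) (nu : {measure set (borel X) -> \bar R})
    (D : set X) (g : X -> R) (a b : R) :
  hausdorff_space X -> compact D -> (nu D < +oo)%E -> continuous g -> a < b ->
  exists t, a < t < b /\ nu (D `&` g @^-1` [set t]) = 0%E.
Proof.
move=> hsX cD nuD_fin cg ab; have clD := compact_closed hsX cD.
apply: exists_null_fiber nuD_fin _ ab; first exact: closed_measurable_borel.
by move=> t; apply: closed_measurable_borel; exact: closedI clD (closed_level cg).
Qed.

End borel_sets.

Theorem proposition5 (R : realType) (G : ptopologicalType)
    (mul : G -> G -> G) (inv : G -> G) (e : G)
    (nu : {measure set (borel G) -> \bar R}) (U : set G) :
  locally_compact_group mul inv e ->
  haar_measure mul nu ->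
  open U -> U e -> (forall x, U x -> U (inv x)) -> compact (closure U) ->
  forall n : nat, exists K : set G,
    [/\ regular_compact K,
        setpow mul e U n `<=` K,
        K `<=` setpow mul e U n.+1 &
        nu (boundary K) = 0%E].
Proof.
move=> [TG hsG lcG] [_ nu_compact _ _ _] oU Ue Usym cU n.
set P := setpow mul e U; set Q := setpow mul e (closure U).
have cQ m : compact (Q m) by exact: (compact_setpow TG (m := m) cU).
have PQ m : P m `<=` Q m by apply: setpow_subset; exact: subset_closure.
have cPn : compact (closure (P n)).
  by rewrite -precompactE; exact: precompact_subset (PQ n)
    (compact_precompact hsG (cQ n)).
have [g [cg g_lt g_eq1]] := compact_open_separator R lcG hsG cPn
  (open_setpowS TG oU n) (closure_setpow_sub TG oU Ue Usym (m := n)).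
have half_lt1 : 2^-1 < 1 :> R by rewrite invf_lt1 ?ltr1n.
have [t [/andP[t_gt t_lt] null]] := compact_null_level hsG (cQ n.+1)
  (nu_compact _ (cQ n.+1)) cg half_lt1.
have KP : closure [set x | g x < t] `<=` P n.+1.
  move=> x /(closure_sublevel_le cg) /= gxt.
  by apply: contrapT => /g_eq1 gx1; move: gxt; rewrite gx1 leNgt t_lt.
exists (closure [set x | g x < t]); split => //.
- apply: (regular_compact_closure_sublevel cg (cQ n.+1)).
  by move=> x /KP; exact: PQ.
- move=> x Px; apply: subset_closure => /=.
  by apply: lt_trans t_gt; apply: g_lt; exact: subset_closure.
- apply/eqP; rewrite eq_le measure_ge0 andbT -null.
  apply: le_measure; rewrite ?in_setE.
  + exact: boundary_measurable_borel.
  + apply: closed_measurable_borel; apply: closedI (closed_level cg).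
    exact: compact_closed.
  + move=> x bx; split; last exact: boundary_closure_sublevel cg _ bx.
    by apply/PQ/KP; case: bx => /closed_closure.
Qed.
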